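(* Let $m$ be a positive integer, $\xi\in\mathbb Z_m$, $\Gamma=\widetilde{BS}(m,\xi)$, $n\ge1$ and $t_1,\dots,t_n\in\{0,\dots,m-1\}$. For integers $c,u_1,\dots,u_n$ let $$w(c,u_1,\dots,u_n)=a^{n+1}\,(ce_0)\,a^{-1}\,(-u_1e_0)\,a^{-1}\,(-u_2e_0)\,a^{-1}\cdots(-u_ne_0)\,a^{-1}\in\Gamma,$$ where $(ke_0)$ denotes the $k$-th power of $e_0$. The following are equivalent: (i) $w(m,t_1,\dots,t_n)\in E$; (ii) $w(m,t_1,\dots,t_n)\,e_0\,w(-m,-t_1,\dots,-t_n)\,e_0^{-1}=1$ in $\Gamma$; (iii) $t_i=r_i(\xi)$ for every $1\le i\le n$.
   Context: $\mathbb Z_m$ is the ring of $m$-adic integers. The functions $r_i$: $r_0(\xi)=0$, $s_0(\xi)=1$, and for $i\ge1$, $r_i(\xi)\in\{0,\dots,m-1\}$, $s_i(\xi)\in\mathbb Z_m$ unique with $\xi s_{i-1}(\xi)=ms_i(\xi)+r_i(\xi)$. Let $E$ be the free abelian group with basis $e_0,e_1,\dots$ (written additively), $E_{m,\xi}\le E$ with basis $me_0,\ e_i-r_i(\xi)e_0$ ($i\ge1$), $E_1\le E$ with basis $e_1,e_2,\dots$, and $\phi:E_{m,\xi}\to E_1$ the isomorphism $\phi(me_0)=e_1$, $\phi(e_i-r_i(\xi)e_0)=e_{i+1}$. $\widetilde{BS}(m,\xi)=\langle E,a\mid axa^{-1}=\phi(x)\ \forall x\in E_{m,\xi}\rangle$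 (HNN extension), with $E$ viewed as a subgroup. *)

From HB Require Import structures.
From mathcomp Require Import all_boot all_order all_algebra.
Set Implicit Arguments. Unset Strict Implicit. Unset Printing Implicit Defensive.
Import Order.TTheory GRing.Theory Num.Theory.

(* m-adic integers Z_m = lim_k Z/m^k, represented by compatible        *)
(* sequences of residues x k in {0,..,m^k - 1} with x (k+1) = x k mod m^k. *)
Definition is_padic (m : nat) (x : nat -> nat) : Prop :=
  forall k, x k < m ^ k /\ x k.+1 %% m ^ k = x k.

Definition padic_one (m : nat) : nat -> nat := fun k => 1 %% m ^ k.
Definition padic_mul (m : nat) (x y : nat -> nat) : nat -> nat :=
  fun k => (x k * y k) %% m ^ k.

(* s_0 = 1; s_i = (xi * s_{i-1} - r_i) / m, with r_i = (xi * s_{i-1}) mod m.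
   (y - r)/m has k-th residue (y_{k+1} - r) %/ m.  These are exactly the
   unique r_i in {0..m-1}, s_i in Z_m with xi s_{i-1} = m s_i + r_i. *)
Fixpoint padic_s (m : nat) (xi : nat -> nat) (i : nat) : nat -> nat :=
  match i with
  | 0 => padic_one m
  | j.+1 => fun k => (padic_mul m xi (padic_s m xi j) k.+1
                      - padic_mul m xi (padic_s m xi j) 1) %/ m
  end.

Definition padic_r (m : nat) (xi : nat -> nat) (i : nat) : nat :=
  match i with
  | 0 => 0
  | j.+1 => padic_mul m xi (padic_s m xi j) 1
  end.

(* The group BS~(m,xi), given by the presentation of the HNN extension:
   generators a, e_0, e_1, ...; relators [e_i,e_j],
   a e_0^m a^-1 e_1^-1, and a e_i e_0^(-r_i) a^-1 e_(i+1)^-1 (i >= 1).  *)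
Inductive gen := GA | GE of nat.
Definition letter := (gen * bool)%type.   (* (g, true) = g^-1 *)
Definition word := seq letter.
Definition linv (l : letter) : letter := (l.1, ~~ l.2).

Definition gpow (g : gen) (k : int) : word :=
  match k with
  | Posz n => nseq n (g, false)
  | Negz n => nseq n.+1 (g, true)
  end.

Inductive relator (m : nat) (xi : nat -> nat) : word -> Prop :=
| rel_comm i j :
    relator m xi [:: (GE i, false); (GE j, false); (GE i, true); (GE j, true)]
| rel_zero :
    relator m xi ((GA, false) :: gpow (GE 0) (Posz m) ++ [:: (GA, true); (GE 1, true)])
| rel_succ i : 0 < i ->
    relator m xi ((GA, false) :: (GE i, false)
                   :: gpow (GE 0) (- (Posz (padic_r m xi i)))%R
                   ++ [:: (GA, true); (GE i.+1, true)]).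

Inductive grp_eq (m : nat) (xi : nat -> nat) : word -> word -> Prop :=
| geq_refl w : grp_eq m xi w w
| geq_sym w1 w2 : grp_eq m xi w1 w2 -> grp_eq m xi w2 w1
| geq_trans w1 w2 w3 : grp_eq m xi w1 w2 -> grp_eq m xi w2 w3 -> grp_eq m xi w1 w3
| geq_cancel u v l : grp_eq m xi (u ++ l :: linv l :: v) (u ++ v)
| geq_rel u v r : relator m xi r -> grp_eq m xi (u ++ r ++ v) (u ++ v).

Definition is_E_letter (l : letter) : bool :=
  if l.1 is GE _ then true else false.

Definition in_E (m : nat) (xi : nat -> nat) (w : word) : Prop :=
  exists v : word, all is_E_letter v /\ grp_eq m xi w v.

Definition wword (n : nat) (c : int) (u : nat -> int) : word :=
  nseq n.+1 (GA, false) ++ gpow (GE 0) c ++ (GA, true)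
    :: flatten [seq gpow (GE 0) (- u i)%R ++ [:: (GA, true)] | i <- iota 1 n].

Arguments relator : clear implicits.
Arguments grp_eq : clear implicits.

From mathcomp Require Import all_boot all_order all_algebra.

Set Implicit Arguments. Unset Strict Implicit. Unset Printing Implicit Defensive.
Import Order.TTheory GRing.Theory Num.Theory.

(* The group acts on the left cosets of E, encoded by their Britton normal forms for
   the HNN extension; E fixes the trivial coset, so (i) and (ii) force w(m, t) and
   w(-m, -t) to fix it.  Evaluating w(+-m, +-t) on a normal form from the inside,
   each conjugation by a absorbs the accumulated element +-(e_i - t_i e_0) of E as
   long as it lies in E_{m,xi}, that is, as long as t_i = r_i; at the first index
   with t_i <> r_i the letter a^-1 survives and the trivial coset is moved.
   Conversely, if all t_i = r_i the defining relations collapse w(m, t) to e_(n+1)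
   and w(-m, -t) to its inverse, which commute with e_0. *)

(** * Calculus of words in the presentation *)

Definition winv (w : word) : word := rev (map linv w).

Lemma linvK : involutive linv.
Proof. by case=> g b; rewrite /linv /= negbK. Qed.

Lemma winv_cat x y : winv (x ++ y) = winv y ++ winv x.
Proof. by rewrite /winv map_cat rev_cat. Qed.

Lemma winv_cons l w : winv (l :: w) = winv w ++ [:: linv l].
Proof. by rewrite /winv map_cons rev_cons cats1. Qed.

Lemma nseqSr (T : Type) (x : T) k : nseq k.+1 x = nseq k x ++ [:: x].
Proof. by elim: k => //= k <-. Qed.

Lemma winv_nseq k l : winv (nseq k l) = nseq k (linv l).
Proof. by elim: k => // k IH; rewrite winv_cons IH -nseqSr. Qed.

Lemma gpowN g k : gpow g (- k%:Z)%R = nseq k (g, true).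
Proof. by case: k => // k; rewrite -NegzE. Qed.

Section WordCalculus.
Variables (m : nat) (xi : nat -> nat).
Local Notation eqG := (grp_eq m xi).

Lemma grp_eq_ctx p q x y : eqG x y -> eqG (p ++ x ++ q) (p ++ y ++ q).
Proof.
elim=> {x y} [w | w1 w2 _ IH | w1 w2 w3 _ IH1 _ IH2 | u v l | u v r hr].
- exact: geq_refl.
- exact: geq_sym.
- exact: geq_trans IH2.
- by have := geq_cancel m xi (p ++ u) (v ++ q) l; rewrite -!catA.
- by have := geq_rel (p ++ u) (v ++ q) hr; rewrite -!catA.
Qed.

Lemma grp_eq_catl p x y : eqG x y -> eqG (p ++ x) (p ++ y).
Proof. by move=> h; have := grp_eq_ctx p [::] h; rewrite !cats0. Qed.

Lemma grp_eq_catr q x y : eqG x y -> eqG (x ++ q) (y ++ q).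
Proof. exact: grp_eq_ctx [::] q x y. Qed.

Lemma grp_eq_relator r : relator m xi r -> eqG r [::].
Proof. by move=> hr; have := geq_rel [::] [::] hr; rewrite /= cats0. Qed.

Lemma grp_eq_mulV1 w l : eqG (w ++ [:: linv l]) [::] -> eqG w [:: l].
Proof.
move=> h; apply: (@geq_trans _ _ _ (w ++ [:: linv l; l])).
  by apply: geq_sym; have := geq_cancel m xi w [::] (linv l); rewrite linvK cats0.
by have := grp_eq_catr [:: l] h; rewrite -catA.
Qed.

Lemma grp_eq_winvl w : eqG (winv w ++ w) [::].
Proof.
elim: w => [|l w IH]; first exact: geq_refl.
rewrite winv_cons -catA /=; apply: geq_trans IH.
by have := geq_cancel m xi (winv w) w (linv l); rewrite linvK.
Qed.

Lemma grp_eq_winv x y : eqG x y -> eqG (winv x) (winv y).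
Proof.
elim=> {x y} [w | w1 w2 _ IH | w1 w2 w3 _ IH1 _ IH2 | u v l | u v r hr].
- exact: geq_refl.
- exact: geq_sym.
- exact: geq_trans IH2.
- by rewrite !winv_cat !winv_cons linvK -!catA; apply: geq_cancel.
- have winv_r : eqG (winv r) [::].
    apply: geq_trans (grp_eq_winvl r).
    by apply: geq_sym; have := geq_rel (winv r) [::] hr; rewrite !cats0.
  by rewrite !winv_cat -catA; exact: (grp_eq_ctx (winv v) (winv u) winv_r).
Qed.

Lemma e0_ei_comm i :
  eqG [:: (GE 0, false); (GE i, false)] [:: (GE i, false); (GE 0, false)].
Proof.
have h : eqG [:: (GE 0, false); (GE i, false); (GE 0, true)] [:: (GE i, false)].
  by apply: (@grp_eq_mulV1 _ (GE i, false)); apply: grp_eq_relator (rel_comm m xi 0 i).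
apply: geq_trans (grp_eq_catr [:: (GE 0, false)] h).
by apply: geq_sym; apply: (geq_cancel m xi [:: (GE 0, false); (GE i, false)] [::] (GE 0, true)).
Qed.

Lemma eiV_e0pow_comm i k q :
  eqG ((GE i, true) :: nseq k (GE 0, false) ++ q) (nseq k (GE 0, false) ++ (GE i, true) :: q).
Proof.
elim: k => [|k IH]; first exact: geq_refl.
apply: geq_trans (grp_eq_catl [:: (GE 0, false)] IH).
apply: (@geq_trans _ _ _ ([:: (GE i, true)] ++ [:: (GE 0, false); (GE i, false)]
                           ++ (GE i, true) :: nseq k (GE 0, false) ++ q)).
  by apply: geq_sym; apply: (geq_cancel m xi [:: (GE i, true); (GE 0, false)]).
apply: geq_trans (grp_eq_ctx _ _ (e0_ei_comm i)) _.
exact: (geq_cancel m xi [::] _ (GE i, true)).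
Qed.

Lemma conj_a_e0m : eqG ((GA, false) :: gpow (GE 0) m ++ [:: (GA, true)]) [:: (GE 1, false)].
Proof.
by apply: (@grp_eq_mulV1 _ (GE 1, false)); have := grp_eq_relator (rel_zero m xi); rewrite /= -catA.
Qed.

Lemma conj_a_e0Nm :
  eqG ((GA, false) :: gpow (GE 0) (- m%:Z) ++ [:: (GA, true)]) [:: (GE 1, true)].
Proof.
by have := grp_eq_winv conj_a_e0m; rewrite winv_cons winv_cat gpowN /= winv_nseq.
Qed.

Lemma conj_a_eiNr i : (0 < i)%N ->
  eqG ((GA, false) :: (GE i, false) :: gpow (GE 0) (- (padic_r m xi i)%:Z) ++ [:: (GA, true)])
      [:: (GE i.+1, false)].
Proof.
move=> i_gt0; apply: (@grp_eq_mulV1 _ (GE i.+1, false)).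
by have := grp_eq_relator (rel_succ m xi i_gt0); rewrite /= -catA.
Qed.

Lemma conj_a_eiVr i : (0 < i)%N ->
  eqG ((GA, false) :: (GE i, true) :: gpow (GE 0) (padic_r m xi i) ++ [:: (GA, true)])
      [:: (GE i.+1, true)].
Proof.
move=> i_gt0; have := grp_eq_winv (conj_a_eiNr i_gt0).
rewrite !winv_cons winv_cat gpowN winv_nseq /= -!catA /=.
apply: geq_trans; exact: (grp_eq_catl [:: (GA, false)] (eiV_e0pow_comm i _ [:: (GA, true)])).
Qed.

Definition wtail (u : nat -> int) i k : word :=
  flatten [seq gpow (GE 0) (- u j)%R ++ [:: (GA, true)] | j <- iota i k].

Lemma wtailS u i k :
  wtail u i k.+1 = (gpow (GE 0) (- u i)%R ++ [:: (GA, true)]) ++ wtail u i.+1 k.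
Proof. by []. Qed.

Lemma wwordE n c u :
  wword n c u = nseq n.+1 (GA, false) ++ gpow (GE 0) c ++ (GA, true) :: wtail u 1 n.
Proof. by []. Qed.

Lemma wword_collapse b c u n :
  eqG ((GA, false) :: gpow (GE 0) c ++ [:: (GA, true)]) [:: (GE 1, b)] ->
  (forall i, (0 < i <= n)%N ->
     eqG ((GA, false) :: (GE i, b) :: gpow (GE 0) (- u i)%R ++ [:: (GA, true)])
         [:: (GE i.+1, b)]) ->
  eqG (wword n c u) [:: (GE n.+1, b)].
Proof.
move=> conj0 conjS.
suff inner i : (0 < i <= n.+1)%N ->
    eqG (wword n c u) (nseq (n.+1 - i) (GA, false) ++ (GE i, b) :: wtail u i (n.+1 - i)).
  by have := inner n.+1; rewrite subnn ltnSn; apply.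
elim: i => [|[|i] IH] // /andP[_ i_le].
  rewrite wwordE subSS subn0 nseqSr -catA.
  by have := grp_eq_ctx (nseq n (GA, false)) (wtail u 1 n) conj0; rewrite /= -!catA.
apply: geq_trans (IH (ltnW i_le)) _.
rewrite !subSS -[n - i](subnSK i_le) nseqSr -catA.
have := grp_eq_ctx (nseq (n - i.+1) (GA, false)) (wtail u i.+2 (n - i.+1)) (conjS i.+1 i_le).
by rewrite wtailS /= -!catA.
Qed.

Lemma wword_eq_e (t : nat -> nat) n : (forall i, (0 < i <= n)%N -> t i = padic_r m xi i) ->
  eqG (wword n (Posz m) (fun i => Posz (t i))) [:: (GE n.+1, false)].
Proof.
move=> t_r; apply: wword_collapse; first exact: conj_a_e0m.
by move=> i /andP[i_gt0 i_le]; rewrite t_r ?i_gt0 //; apply: conj_a_eiNr.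
Qed.

Lemma wword_eq_eV (t : nat -> nat) n : (forall i, (0 < i <= n)%N -> t i = padic_r m xi i) ->
  eqG (wword n (- Posz m)%R (fun i => - Posz (t i))%R) [:: (GE n.+1, true)].
Proof.
move=> t_r; apply: wword_collapse; first exact: conj_a_e0Nm.
by move=> i /andP[i_gt0 i_le]; rewrite opprK t_r ?i_gt0 //; apply: conj_a_eiVr.
Qed.

End WordCalculus.

Lemma first_mismatch (f g : nat -> nat) n :
  (forall i, (0 < i <= n)%N -> f i = g i) \/
  exists j, [/\ (0 < j <= n)%N, forall k, (0 < k < j)%N -> f k = g k & f j <> g j].
Proof.
pose P j := (0 < j <= n)%N && (f j != g j).
have [[j0 Pj0] | noP] := altP (@existsP _ (fun j : 'I_n.+1 => P j)).
  right; have [j /andP[/andP[j_gt0 j_le] /eqP fj_neq] j_min] := ex_minnP (ex_intro P _ Pj0).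
  exists j; split=> [|k /andP[k_gt0 k_lt]|//]; first by rewrite j_gt0.
  apply/eqP; have k_le : (k <= n)%N := leq_trans (ltnW k_lt) j_le.
  by apply: contraTT k_lt => fk_neq; rewrite -leqNgt j_min // /P k_gt0 k_le.
left=> i /andP[i_gt0 i_le]; apply/eqP; apply: contraNT noP => fi_neq.
by apply/existsP; exists (Ordinal (i_le : (i < n.+1)%N)); rewrite /P i_gt0 i_le.
Qed.

(** * The action of the group on the cosets of E *)

Section CosetAction.
Variables (m : nat) (xi : nat -> nat).
Hypothesis m_gt0 : (0 < m)%N.
Local Open Scope ring_scope.
Local Notation r := (padic_r m xi).

Lemma mz_neq0 : m%:Z != 0.
Proof. by rewrite eqz_nat -lt0n. Qed.

Lemma mz_gt0 : 0 < m%:Z.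
Proof. by rewrite ltz_nat. Qed.

(* An element sum_i x_i e_i of E is the sequence of its coordinates; trailing
   zeros are immaterial, whence [veq]. *)
Definition vadd (x y : seq int) := mkseq (fun i => x`_i + y`_i) (maxn (size x) (size y)).
Definition vscale (k : int) (x : seq int) := map ( *%R k) x.
Definition vunit (i : nat) : seq int := rcons (nseq i 0) 1.
Definition veq (x y : seq int) := forall i, x`_i = y`_i.
Arguments vadd : simpl never.
Arguments vscale : simpl never.
Arguments vunit : simpl never.

Lemma nth_vadd x y i : (vadd x y)`_i = x`_i + y`_i.
Proof.
rewrite /vadd; case: (ltnP i (maxn (size x) (size y))) => h; first by rewrite nth_mkseq.
by move: (h); rewrite geq_max => /andP[hx hy]; rewrite !nth_default ?size_mkseq ?addr0.
Qed.

Lemma nth_vscale k x i : (vscale k x)`_i = k * x`_i.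
Proof.
case: (ltnP i (size x)) => h; first by rewrite (nth_map 0).
by rewrite !nth_default ?size_map ?mulr0.
Qed.

Lemma nth_vunit j i : (vunit j)`_i = (i == j)%:R.
Proof. by rewrite /vunit nth_rcons size_nseq nth_nseq; case: ltngtP. Qed.

(* [rsum x] is x_0 + sum_(i >= 1) x_i r_i.  Thus x lies in E_{m,xi} iff m divides
   [rsum x], and then phi x = (rsum x / m) e_1 + sum_(i >= 1) x_i e_(i+1). *)
Definition weight (i : nat) : int := if i is 0 then 1 else (r i)%:Z.
Definition rsum (x : seq int) : int := \sum_(i < size x) x`_i * weight i.

Lemma rsum_widen x N : (size x <= N)%N -> rsum x = \sum_(i < N) x`_i * weight i.
Proof.
move=> h; rewrite /rsum -(subnKC h) big_split_ord /=.
by rewrite [X in _ = _ + X]big1 ?addr0 // => i _; rewrite nth_default ?mul0r // leq_addr.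
Qed.

Lemma veq_rsum x y : veq x y -> rsum x = rsum y.
Proof.
move=> h; rewrite (rsum_widen (leq_maxl (size x) (size y))).
by rewrite (rsum_widen (leq_maxr (size x) (size y))); apply: eq_bigr => i _; rewrite h.
Qed.

Lemma rsumD x y : rsum (vadd x y) = rsum x + rsum y.
Proof.
rewrite (rsum_widen (leq_maxl (size x) (size y))) (rsum_widen (leq_maxr (size x) (size y))).
by rewrite /rsum size_mkseq -big_split; apply: eq_bigr => i _; rewrite nth_vadd mulrDl.
Qed.

Lemma rsumZ k x : rsum (vscale k x) = k * rsum x.
Proof. by rewrite /rsum size_map mulr_sumr; apply: eq_bigr => i _; rewrite nth_vscale mulrA. Qed.

Lemma rsum_vunit j : rsum (vunit j) = weight j.
Proof.
rewrite /rsum size_rcons size_nseq big_ord_recr /= big1 ?add0r.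
  by rewrite -/(vunit j) nth_vunit eqxx mul1r.
by move=> i _; rewrite -/(vunit j) nth_vunit (ltn_eqF (ltn_ord i)) mul0r.
Qed.

Lemma rsum_cons h s : rsum (h :: s) = h + \sum_(i < size s) s`_i * weight i.+1.
Proof. by rewrite /rsum big_ord_recl /= mulr1. Qed.

Lemma rsum_nil : rsum [::] = 0.
Proof. by rewrite /rsum big_ord0. Qed.

Lemma rsum_head x : rsum x = x`_0 + rsum (0 :: behead x).
Proof. by case: x => [|h s]; rewrite ?rsum_nil !rsum_cons ?big_ord0 ?add0r ?addr0. Qed.

Definition phi (x : seq int) : seq int := 0 :: (rsum x %/ m)%Z :: behead x.

(* The inverse of phi on E_1; the coordinate x_0 is ignored. *)
Definition phi_inv (x : seq int) : seq int := (m%:Z * x`_1 - rsum (0 :: drop 2 x)) :: drop 2 x.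

Lemma rsum_phi_inv x : rsum (phi_inv x) = m%:Z * x`_1.
Proof. by rewrite /phi_inv rsum_cons -(add0r (\sum_(_ < _) _)) -rsum_cons addrNK. Qed.

Lemma phi_invK x : (rsum x %% m)%Z = 0 -> veq x (phi_inv (phi x)).
Proof.
move=> hx [|i] /=; last by rewrite nth_drop /= nth_behead.
have -> : m%:Z * (rsum x %/ m)%Z = rsum x by rewrite [RHS](divz_eq (rsum x) m) hx addr0 mulrC.
by rewrite drop0 [rsum x]rsum_head addrK.
Qed.

Lemma veq_phi_inv x y : veq x y -> veq (phi_inv x) (phi_inv y).
Proof.
have veq_tail : veq x y -> veq (0 :: drop 2 x) (0 :: drop 2 y).
  by move=> h [|i] //=; rewrite !nth_drop h.
by move=> h [|i] /=; rewrite ?h ?(veq_rsum (veq_tail h)) // !nth_drop h.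
Qed.

(* [:: (t_1, b_1); ...; (t_k, b_k)] stands for the coset
   (t_1 e_0) a^(e_1) ... (t_k e_0) a^(e_k) E, where e_j = -1 iff b_j.  Reduced
   lists, with 0 <= t_j < m whenever b_j and no factor a^e (0 e_0) a^(-e), are
   Britton normal forms, one for each coset. *)
Definition reduced_letter (e : int * bool) := e.2 ==> (0 <= e.1 < m%:Z).
Definition pinch (e f : int * bool) := (f.1 == 0) && (f.2 == ~~ e.2).

Fixpoint reduced (L : seq (int * bool)) : bool :=
  if L is e :: L' then
    [&& reduced_letter e, reduced L' & (if L' is f :: _ then ~~ pinch e f else true)]
  else true.

Lemma reduced_behead e L : reduced (e :: L) -> reduced L.
Proof. by case/and3P. Qed.

(* The left action of x in E: x (t e_0) a = ((t + x_0) e_0) a (phi_inv x), and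
   x (t e_0) a^-1 = (s e_0) a^-1 phi(x + (t - s) e_0) with s = (t + rsum x) mod m. *)
Fixpoint eact (x : seq int) (L : seq (int * bool)) : seq (int * bool) :=
  if L is (t, b) :: L' then
    if b then ((t + rsum x) %% m, true)%Z :: eact (0 :: ((t + rsum x) %/ m)%Z :: behead x) L'
    else (t + x`_0, false) :: eact (phi_inv x) L'
  else [::].

Lemma eact_veq L x y : veq x y -> eact x L = eact y L.
Proof.
elim: L x y => [|[t [|]] L IH] x y h //=; rewrite ?(veq_rsum h).
  by congr (_ :: _); apply: IH => -[|[|i]] //=; rewrite !nth_behead h.
by rewrite h; congr (_ :: _); apply/IH/veq_phi_inv.
Qed.

Lemma eact_vadd L x y : eact x (eact y L) = eact (vadd x y) L.
Proof.
elim: L x y => [|[t [|]] L IH] x y //=; rewrite IH.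
  rewrite rsumD; congr (_ :: _); first by rewrite modzDml addrAC addrA.
  apply: eact_veq => -[|[|i]] /=; rewrite ?nth_vadd ?addr0 //; last first.
    by rewrite /= !nth_behead nth_vadd.
  rewrite [X in _ = (X %/ _)%Z]
    (_ : _ = ((t + rsum y) %/ m)%Z * m + (((t + rsum y) %% m)%Z + rsum x)).
    by rewrite divzMDl ?mz_neq0 // addrC.
  by rewrite [RHS]addrA -divz_eq [rsum x + _]addrC addrA.
rewrite nth_vadd; congr (_ :: _); first by rewrite -addrA (addrC y`_0).
apply: eact_veq => -[|i]; rewrite nth_vadd /phi_inv /=; last by rewrite !nth_drop nth_vadd.
have -> : rsum (0 :: drop 2 (vadd x y)) = rsum (0 :: drop 2 x) + rsum (0 :: drop 2 y).
  by rewrite -rsumD; apply: veq_rsum => -[|i] /=; rewrite nth_vadd /= ?addr0 // !nth_drop nth_vadd.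
by rewrite !nth_vadd mulrDr opprD addrACA.
Qed.

Lemma eact_veq0 L x : veq x [::] -> reduced L -> eact x L = L.
Proof.
elim: L x => [|[t b] L IH] x h //= /and3P[t_rng hL _]; case: b t_rng => /= t_rng.
  rewrite (veq_rsum h) rsum_nil addr0 modz_small // divz_small //.
  by rewrite IH // => -[|[|i]] //=; rewrite nth_behead h.
rewrite h addr0 IH // => -[|i] /=; last by rewrite nth_drop h.
rewrite h mulr0 add0r (@veq_rsum _ [::]) ?rsum_nil ?oppr0 //.
by move=> -[|i] //=; rewrite nth_drop h.
Qed.

Lemma eact_reduced L x : reduced L -> reduced (eact x L).
Proof.
elim: L x => [|[t b] L IH] x //= /and3P[t_rng hL no_pinch].
case: b t_rng no_pinch => /= t_rng no_pinch; rewrite IH //=.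
  rewrite /reduced_letter /= modz_ge0 ?ltz_pmod ?mz_neq0 ?mz_gt0 //=.
  by case: L {IH} hL no_pinch => [|[t1 [|]] L] //=; rewrite /pinch /= ?addr0 ?andbF.
case: L {IH} hL no_pinch => [|[t1 [|]] L] //=; last by move=> _ _; rewrite /pinch /= andbF.
case/and3P=> /= t1_rng _ _.
by rewrite rsum_phi_inv -modzDmr mulrC modzMl addr0 modz_small.
Qed.

Definition lead_a (b : bool) (L : seq (int * bool)) :=
  if L is (t, b') :: _ then (t == 0) && (b' == b) else false.
Definition act_a L := if lead_a true L then behead L else (0, false) :: L.
Definition act_aV L := if lead_a false L then behead L else (0, true) :: L.

Lemma act_a_reduced L : reduced L -> reduced (act_a L).
Proof.
rewrite /act_a; case: ifP => hA hL; first by case: L hA hL => [|e L] // _ /reduced_behead.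
by rewrite /= hL /=; case: L hA {hL} => [|[t b] L] //=; rewrite /pinch /= => ->.
Qed.

Lemma act_aV_reduced L : reduced L -> reduced (act_aV L).
Proof.
rewrite /act_aV; case: ifP => hA hL; first by case: L hA hL => [|e L] // _ /reduced_behead.
rewrite /= hL /reduced_letter /= mz_gt0 /=.
by case: L hA {hL} => [|[t b] L] //=; rewrite /pinch /= => ->.
Qed.

Lemma act_aK L : reduced L -> act_a (act_aV L) = L.
Proof.
rewrite /act_aV; case: ifP => hA hL; last by rewrite /act_a /= ?eqxx.
case: L hA hL => [|[t b] L] //= /andP[/eqP -> /eqP ->] /and3P[_ _].
by rewrite /act_a; case: L => [|[t1 b1] L] //=; rewrite /pinch /= => /negbTE ->.
Qed.

Lemma act_aVK L : reduced L -> act_aV (act_a L) = L.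
Proof.
rewrite /act_a; case: ifP => hA hL; last by rewrite /act_aV /= ?eqxx.
case: L hA hL => [|[t b] L] //= /andP[/eqP -> /eqP ->] /and3P[_ _].
by rewrite /act_aV; case: L => [|[t1 b1] L] //=; rewrite /pinch /= => /negbTE ->.
Qed.

Definition act_letter (l : letter) L :=
  match l with
  | (GA, b) => if b then act_aV L else act_a L
  | (GE i, b) => eact (if b then vscale (-1) (vunit i) else vunit i) L
  end.
Definition act_word (w : word) L := foldr act_letter L w.

Lemma act_word_cat w1 w2 L : act_word (w1 ++ w2) L = act_word w1 (act_word w2 L).
Proof. exact: foldr_cat. Qed.

Lemma act_word_cons l w L : act_word (l :: w) L = act_letter l (act_word w L).
Proof. by []. Qed.

Lemma act_word_reduced w L : reduced L -> reduced (act_word w L).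
Proof.
elim: w => // [[[|i] [|]]] w IH hL /=; move/IH: hL.
- exact: act_aV_reduced.
- exact: act_a_reduced.
- exact: eact_reduced.
- exact: eact_reduced.
Qed.

Lemma act_letterK l L : reduced L -> act_letter l (act_letter (linv l) L) = L.
Proof.
case: l => [[|i] [|]] hL /=; first exact: act_aVK; first exact: act_aK;
  by rewrite eact_vadd eact_veq0 // => j; rewrite nth_vadd nth_vscale nth_nil mulN1r ?addNr ?subrr.
Qed.

Lemma act_a_conj x L : (rsum x %% m)%Z = 0 -> reduced L ->
  act_a (eact x (act_aV L)) = eact (phi x) L.
Proof.
move=> hx hL; rewrite /act_aV; case: ifP => hA; last by rewrite /= add0r hx /act_a /=.
case: L hA hL => [|[t b] L] //= /andP[/eqP -> /eqP ->] /and3P[_ hL no_pinch].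
rewrite addr0; have -> : act_a (eact x L) = (0, false) :: eact x L.
  rewrite /act_a; case: L hL no_pinch => [|[t1 [|]] L] //= hL; last by rewrite andbF.
  case/and3P: hL => /= t1_rng _ _; rewrite /pinch /= andbT => /negbTE t1_neq0.
  by rewrite -modzDmr hx addr0 modz_small // t1_neq0.
by congr (_ :: _); apply/eact_veq/phi_invK.
Qed.

Lemma act_word_gpow i k L : reduced L -> act_word (gpow (GE i) k) L = eact (vscale k (vunit i)) L.
Proof.
move=> hL; have act_nseq b n : act_word (nseq n (GE i, b)) L =
    eact (vscale (n%:Z * (if b then -1 else 1)) (vunit i)) L.
  elim: n => [|n IH] /=; first by rewrite eact_veq0 // => j; rewrite nth_vscale !mul0r nth_nil.
  rewrite IH eact_vadd; apply: eact_veq => j.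
  by rewrite nth_vadd !nth_vscale intS !mulrDl; case: b {IH}; rewrite ?nth_vscale ?mul1r ?mulr1.
by case: k => n; rewrite /gpow act_nseq ?mulr1 // NegzE mulrN1.
Qed.

Lemma phi_shift_vunit x k : rsum x = 0 -> (forall j, x`_j.+1 = (vunit k)`_j.+1) -> (0 < k)%N ->
  veq (vadd (phi x) (vscale (-1) (vunit k.+1))) [::].
Proof.
move=> hx hk k_gt0 [|[|j]]; rewrite nth_vadd nth_vscale nth_vunit nth_nil /phi /=.
- by rewrite mulr0 addr0.
- by rewrite hx div0z add0r; case: k k_gt0 {hk}.
- by rewrite nth_behead hk nth_vunit eqSS; case: eqP; rewrite ?mulr0 ?addr0 ?mulr1 ?subrr.
Qed.

Lemma act_word_relator rel L : relator m xi rel -> reduced L -> act_word rel L = L.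
Proof.
case=> [i j | | i i_gt0] hL.
- rewrite /= !eact_vadd eact_veq0 // => k.
  by rewrite !nth_vadd !nth_vscale nth_nil !mulN1r [_ + _ - _]addrAC addrK subrr.
- rewrite act_word_cons act_word_cat act_word_gpow ?act_word_reduced //=.
  rewrite act_a_conj ?eact_reduced //; last first.
    by rewrite rsumZ rsum_vunit mulr1 -[X in (X %% _)%Z]mul1r modzMl.
  rewrite eact_vadd eact_veq0 // => -[|[|j]] /=; rewrite ?mulr0 ?addr0 ?nth_nil //.
  by rewrite /rsum big_ord1 /= !mulr1 -[X in (X %/ _)%Z]mul1r mulzK // mz_neq0.
- rewrite !act_word_cons act_word_cat act_word_gpow ?act_word_reduced //=.
  have rsum0 : rsum (vadd (vunit i) (vscale (- (r i)%:Z) (vunit 0))) = 0.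
    by rewrite rsumD rsumZ !rsum_vunit /= mulr1; case: i i_gt0 => // i _; rewrite subrr.
  rewrite eact_vadd act_a_conj ?eact_reduced ?rsum0 ?mod0z //.
  rewrite eact_vadd eact_veq0 //; apply: phi_shift_vunit => // j.
  by rewrite nth_vadd nth_vscale !nth_vunit mulr0 addr0.
Qed.

Lemma act_word_grp_eq w1 w2 :
  grp_eq m xi w1 w2 -> forall L, reduced L -> act_word w1 L = act_word w2 L.
Proof.
elim=> {w1 w2} [w | w1 w2 _ IH | w1 w2 w3 _ IH1 _ IH2 | u v l | u v rel hrel] L hL.
- by [].
- by rewrite IH.
- by rewrite IH1 // IH2.
- by rewrite !act_word_cat !act_word_cons act_letterK //; exact: act_word_reduced _ hL.
- by rewrite !act_word_cat (act_word_relator hrel) //; exact: act_word_reduced _ hL.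
Qed.

Lemma act_word_E w : all is_E_letter w -> act_word w [::] = [::].
Proof. by elim: w => [|[[|i] b] w IH] //= /IH ->. Qed.

Lemma in_E_act_word w : in_E m xi w -> act_word w [::] = [::].
Proof. by case=> v [/act_word_E v_E /act_word_grp_eq ->]. Qed.

Lemma padic_r_ltn i : (0 < i)%N -> (r i < m)%N.
Proof. by case: i => // i _; rewrite /= /padic_mul expn1 ltn_pmod. Qed.

Lemma act_wtailS u i k L : reduced L ->
  act_word (wtail u i k.+1) L =
  eact (vscale (- u i) (vunit 0)) (act_aV (act_word (wtail u i.+1 k) L)).
Proof.
by move=> hL; rewrite wtailS !act_word_cat act_word_gpow //; apply/act_aV_reduced/act_word_reduced.
Qed.

Lemma act_aV_nolead L : ~~ lead_a false L -> act_aV L = (0, true) :: L.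
Proof. by rewrite /act_aV => /negbTE ->. Qed.

Lemma wtail_nolead u i k L : reduced L -> ~~ lead_a false L ->
  ~~ lead_a false (act_word (wtail u i k) L).
Proof.
move=> hL hA; elim: k i => [|k IH] i //.
by rewrite act_wtailS // act_aV_nolead ?IH //= andbF.
Qed.

Lemma iter_act_a k L : ~~ lead_a true L -> iter k act_a L = nseq k (0, false) ++ L.
Proof. by move=> hA; elim: k => [|[|k] IH] //; rewrite iterS IH /act_a //= (negbTE hA). Qed.

Lemma act_word_nseq_a k L : act_word (nseq k (GA, false)) L = iter k act_a L.
Proof. by elim: k => //= k ->. Qed.

(* The word a^(n+1) (c e_0) a^-1 (-u_1 e_0) a^-1 ... is evaluated from the inside:
   while the successive elements [defect s u i] = s e_i - u_i e_0 lie in ker rsum,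
   each conjugation by a turns the accumulated element into the next defect. *)
Definition defect (s : int) (u : nat -> int) k :=
  vadd (vscale s (vunit k)) (vscale (- u k) (vunit 0)).

Lemma rsum_defect s u k : (0 < k)%N -> rsum (defect s u k) = s * (r k)%:Z - u k.
Proof. by case: k => // k _; rewrite rsumD !rsumZ !rsum_vunit /= mulr1. Qed.

Lemma defect1E (s : int) u :
  veq (vadd (phi (vscale (s * m%:Z) (vunit 0))) (vscale (- u 1%N) (vunit 0))) (defect s u 1).
Proof.
move=> [|[|j]]; rewrite !nth_vadd !nth_vscale !nth_vunit /phi /= ?mulr0 //.
  by rewrite rsumZ rsum_vunit /= !mulr1 mulzK ?mz_neq0 // !addr0.
by rewrite ?nth_behead nth_vscale ?nth_vunit ?nth_nil !mulr0 addr0.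
Qed.

Lemma defectSE s u i : (0 < i)%N -> rsum (defect s u i) = 0 ->
  veq (vadd (phi (defect s u i)) (vscale (- u i.+1) (vunit 0))) (defect s u i.+1).
Proof.
move=> i_gt0 hi [|[|j]]; rewrite /defect !nth_vadd !nth_vscale !nth_vunit /phi /= ?mulr0 //.
  by rewrite -/(defect s u i) hi div0z; case: i i_gt0 {hi} => // i _; rewrite mulr0.
by rewrite nth_behead nth_vadd !nth_vscale !nth_vunit eqSS /= mulr0 !addr0.
Qed.

Lemma act_wword_defect (s : int) u n L : reduced L -> ~~ lead_a false L ->
  forall i, (0 < i <= n)%N -> (forall k, (0 < k < i)%N -> rsum (defect s u k) = 0) ->
  act_word (wword n (s * m%:Z) u) L =
    iter (n - i).+1 act_a (eact (defect s u i) (act_aV (act_word (wtail u i.+1 (n - i)) L))).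
Proof.
move=> hL hA; elim=> [|[|i] IH] // /andP[_ i_le] hk.
  rewrite wwordE act_word_cat act_word_nseq_a act_word_cat act_word_cons act_word_gpow;
    last exact/act_aV_reduced/act_word_reduced.
  rewrite iterSr [act_letter _ _]/= act_a_conj ?act_word_reduced //; last first.
    by rewrite rsumZ rsum_vunit mulr1 modzMl.
  case: n i_le {hk IH} => // n _; rewrite subSS subn0 act_wtailS // eact_vadd.
  by congr (iter _ _ _); apply/eact_veq/defect1E.
have hi : rsum (defect s u i.+1) = 0 by apply: hk; rewrite ltnSn.
rewrite IH ?(ltnW i_le) //; last by move=> k /andP[k_gt0 k_lt]; rewrite hk // k_gt0 ltnW.
rewrite -[(n - i.+1)%N](subnSK i_le) iterSr act_a_conj ?act_word_reduced ?hi ?mod0z //.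
by rewrite act_wtailS // eact_vadd; congr (iter _ _ _); apply/eact_veq/defectSE.
Qed.

(* At the first defect outside E_{m,xi} the letter a^-1 can no longer be absorbed,
   and the normal form keeps its leading a. *)
Lemma act_wword_lead_a (s : int) u n L j : reduced L -> ~~ lead_a false L -> (0 < j <= n)%N ->
  (forall k, (0 < k < j)%N -> rsum (defect s u k) = 0) -> (rsum (defect s u j) %% m)%Z != 0 ->
  exists R, act_word (wword n (s * m%:Z) u) L = (0, false) :: R.
Proof.
move=> hL hA hj hk hx; rewrite (act_wword_defect hL hA hj hk).
rewrite act_aV_nolead ?wtail_nolead // iter_act_a /=; first by eexists.
by rewrite add0r andbT.
Qed.

Lemma modz_sub_neq0 (a b : nat) : (a < m)%N -> (b < m)%N -> a <> b -> ((a%:Z - b%:Z) %% m)%Z != 0.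
Proof.
move=> a_lt b_lt a_neq_b; apply/eqP => h.
have : ((a%:Z - b%:Z + b%:Z) %% m)%Z = (b%:Z %% m)%Z by rewrite -modzDml h add0r.
by rewrite subrK !modz_small // => -[].
Qed.

Lemma act_wword_mismatch (s c : int) (u : nat -> int) (t : nat -> nat) n j L :
  (s = 1 \/ s = -1) -> c = s * m%:Z -> (forall i, u i = s * (t i)%:Z) ->
  reduced L -> ~~ lead_a false L -> (0 < j <= n)%N ->
  (forall k, (0 < k < j)%N -> t k = r k) -> (t j < m)%N -> t j <> r j ->
  exists R, act_word (wword n c u) L = (0, false) :: R.
Proof.
move=> s_unit -> hu hL hA hj t_eq t_lt t_neq; have j_gt0 : (0 < j)%N by case/andP: hj.
apply: (act_wword_lead_a (j := j)) => //.
  move=> k hk; have /andP[k_gt0 _] := hk.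
  by rewrite rsum_defect // hu t_eq // subrr.
rewrite rsum_defect // hu -mulrBr.
have r_lt := padic_r_ltn j_gt0.
case: s_unit => ->; rewrite ?mul1r ?mulN1r ?opprB ?modz_sub_neq0 //.
by move=> /esym.
Qed.

End CosetAction.

Theorem lemma5p4 (m : nat) (xi : nat -> nat) (n : nat) (t : nat -> nat) :
  0 < m -> is_padic m xi -> 1 <= n ->
  (forall i, 1 <= i <= n -> t i < m) ->
  let w1 := wword n (Posz m) (fun i => Posz (t i)) in
  let w2 := wword n (- Posz m)%R (fun i => (- Posz (t i))%R) in
  let P1 := in_E m xi w1 in
  let P2 := grp_eq m xi (w1 ++ (GE 0, false) :: w2 ++ [:: (GE 0, true)]) [::] in
  let P3 := forall i, 1 <= i <= n -> t i = padic_r m xi i in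
  (P1 <-> P3) /\ (P2 <-> P3).
Proof.
(* r_i is defined by its residue formula for any xi, and n = 0 is harmless. *)
move=> m_gt0 _ _ t_lt w1 w2 P1 P2 P3.
have [t_r | [j [j_rng t_r_before t_r_j]]] := first_mismatch t (padic_r m xi) n.
  have w1E : grp_eq m xi w1 [:: (GE n.+1, false)] := wword_eq_e t_r.
  have w2E : grp_eq m xi w2 [:: (GE n.+1, true)] := wword_eq_eV t_r.
  split; split=> // _; first by exists [:: (GE n.+1, false)].
  apply: geq_trans (grp_eq_catr _ w1E) _.
  apply: geq_trans (grp_eq_ctx [:: (GE n.+1, false); (GE 0, false)] [:: (GE 0, true)] w2E) _.
  exact: grp_eq_relator (rel_comm m xi n.+1 0).
have t_j_lt : t j < m by apply: t_lt.
have w1_moves L : reduced m L -> ~~ lead_a false L ->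
    exists R, act_word m xi w1 L = (0%R, false) :: R.
  move=> hL hA; apply: (act_wword_mismatch m_gt0 (t := t) (or_introl erefl) _ _ hL hA j_rng) => //.
  - by rewrite mul1r.
  - by move=> i; rewrite mul1r.
have [R2 w2_moves] : exists R, act_word m xi w2 [::] = (0%R, false) :: R.
  apply: (act_wword_mismatch m_gt0 (t := t) (or_intror erefl) _ _ _ _ j_rng) => //.
  - by rewrite mulN1r.
  - by move=> i; rewrite mulN1r.
have not_P3 : ~ P3 by move/(_ j j_rng).
suff : ~ P1 /\ ~ P2 by tauto.
split=> hP.
  by have [R] := w1_moves [::] isT isT; rewrite (in_E_act_word m_gt0 hP).
have := act_word_grp_eq m_gt0 hP (isT : reduced m [::]); clearbody w1 w2.
rewrite act_word_cat act_word_cons act_word_cat [act_word _ _ [:: _] _]/= w2_moves.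
have [||R ->] // := w1_moves (eact m xi (vunit 0) ((0%R, false) :: R2)).
by apply: eact_reduced => //; rewrite -w2_moves; exact: act_word_reduced.
Qed.
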